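(* Let $A$ be a $\mathbb{Z}$-module and let $S'\subset S\subset\mathbb{N}$. Suppose that for each $n\in S$ there is a finite sequence $n'=n_0\Leftrightarrow_A n_1\Leftrightarrow_A\cdots\Leftrightarrow_A n_r=n$ ($r\ge0$) of elements of $S$ with $n'\in S'$. Then the homomorphism $\rho^A_{S,S'}\colon A[q]^S\to A[q]^{S'}$ induced by the identity of $A[q]$ is injective.
   Context: $q$ is an indeterminate; $A[q]$ is the $\mathbb{Z}[q]$-module of polynomials in $q$ with coefficients in $A$. For $n\in\mathbb{N}$, $\Phi_n(q)$ is the $n$th cyclotomic polynomial; for $S\subset\mathbb{N}$, $\Phi_S^*$ is the multiplicative subset of $\mathbb{Z}[q]$ generated by $\{\Phi_m(q):m\in S\}$, directed by divisibility, and $A[q]^S=\varprojlim_{f\in\Phi_S^*}A[q]/fA[q]$. $A$ is $p$-adically separated if $\bigcap_{j\ge0}p^jA=0$. For $m,n\in\mathbb{N}$ write $m\Leftrightarrow_A n$ if $m=n$, or $A=0$, or $m/n$ is an integer power (positive or negative exponent) of a prime $p$ such that $A$ is $p$-adically separated. *)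

From HB Require Import structures.
From mathcomp Require Import all_boot all_order all_algebra all_field.
Set Implicit Arguments. Unset Strict Implicit. Unset Printing Implicit Defensive.
Import Order.TTheory GRing.Theory Num.Theory.
Local Open Scope ring_scope.

(* A[q] for a Z-module A (zmodType) is represented by coefficient sequences
   p : seq A (p`_k is the coefficient of q^k; trailing zeros irrelevant).
   Z[q] = {poly int} acts on A[q] by Cauchy product. *)

Definition polyA_eqmod (A : zmodType) (f : {poly int}) (p p' : seq A) : Prop :=
  exists r : seq A, forall k : nat,
    p`_k - p'`_k = \sum_(i < k.+1) r`_(k - i) *~ f`_i.

Definition PhiStar (S : nat -> Prop) (f : {poly int}) : Prop :=
  exists s : seq nat, (forall m, m \in s -> S m) /\ f = \prod_(m <- s) 'Phi_m.

(* An element of A[q]^S = lim_{f in Phi_S^*} A[q]/fA[q], given by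
   representatives x f in A[q] compatible along divisibility f | g. *)
Definition limit_elt (A : zmodType) (S : nat -> Prop)
    (x : {poly int} -> seq A) : Prop :=
  forall f g : {poly int}, PhiStar S f -> PhiStar S g ->
    (exists h : {poly int}, g = h * f) -> polyA_eqmod f (x g) (x f).

Definition padic_separated (A : zmodType) (p : nat) : Prop :=
  forall a : A, (forall j : nat, exists b : A, a = b *+ (p ^ j)%N) -> a = 0.

Definition equivA (A : zmodType) (m n : nat) : Prop :=
  m = n \/ (forall a : A, a = 0) \/
  exists p k : nat, prime p /\ padic_separated A p /\
    (m = (n * p ^ k)%N \/ n = (m * p ^ k)%N).

Definition chain_condition (A : zmodType) (S S' : nat -> Prop) : Prop :=
  forall n, S n -> exists (r : nat) (c : nat -> nat),
    [/\ S' (c 0%N), c r = n, (forall i, (i <= r)%N -> S (c i)) &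
        (forall i, (i < r)%N -> equivA A (c i) (c i.+1))].

From HB Require Import structures.
From mathcomp Require Import all_boot all_algebra all_field ring.
Set Implicit Arguments. Unset Strict Implicit. Unset Printing Implicit Defensive.
Import GRing.Theory.
Local Open Scope ring_scope.

(* Over F_p, X^(m p^i) - 1 = (X^m - 1)^(p^i).  Factoring both sides into
   cyclotomic polynomials and inducting on m prime to p gives Phi_(m p^i) =
   Phi_m^c with c > 0 in F_p[X], so when n' and n differ by a power of p, some
   power of Phi_n' lies in the ideal (Phi_n^e, p^j) of Z[q] for all e and j.
   Hence, the representatives being compatible, if x - y vanishes modulo
   g Phi_n'^M for every M, then its remainder modulo the monic polynomial
   g Phi_n^e is divisible by every p^j, so it is zero as A is p-adically
   separated.  Moving along the chains from S' to S one
   cyclotomic factor at a time gives x = y modulo every f in Phi_S^*. *)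

Lemma prime_coprime_gt0 p m : prime p -> coprime p m -> (0 < m)%N.
Proof. by case: m => // p_pr; rewrite /coprime gcdn0 => /eqP p1; rewrite p1 in p_pr. Qed.

Lemma dvdn_mul_pexpS p m i x : prime p -> coprime p m ->
  (x %| m * p ^ i.+1)%N -> ~~ (x %| m * p ^ i)%N ->
  exists2 d, (d %| m)%N & x = (d * p ^ i.+1)%N.
Proof.
move=> p_pr cop_pm x_dvd x_ndvd.
have p_gt1 := prime_gt1 p_pr.
have m_gt0 := prime_coprime_gt0 p_pr cop_pm.
have x_gt0 : (0 < x)%N by apply: dvdn_gt0 x_dvd; rewrite muln_gt0 m_gt0 expn_gt0 ltnW.
have [d cop_pd def_x] := pfactor_coprime p_pr x_gt0.
rewrite def_x in x_dvd x_ndvd *.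
have d_dvd : (d %| m)%N.
  rewrite -(@Gauss_dvdl _ _ (p ^ i.+1)) 1?coprime_sym ?coprimeXl //.
  exact: dvdn_trans (dvdn_mulr _ _) x_dvd.
exists d => //; congr (_ * p ^ _)%N; apply/eqP; rewrite eqn_leq.
apply/andP; split.
  rewrite -(dvdn_Pexp2l _ _ p_gt1) -(@Gauss_dvdr _ m) ?coprimeXl //.
  exact: dvdn_trans (dvdn_mull _ _) x_dvd.
apply: contraNT x_ndvd; rewrite -ltnNge ltnS -(dvdn_Pexp2l _ _ p_gt1).
exact: dvdn_mul.
Qed.

Lemma perm_divisors_mul_pexpS p m i : prime p -> coprime p m ->
  perm_eq (divisors (m * p ^ i.+1))
          (divisors (m * p ^ i) ++ [seq (d * p ^ i.+1)%N | d <- divisors m]).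
Proof.
move=> p_pr cop_pm.
have p_gt1 := prime_gt1 p_pr.
have m_gt0 := prime_coprime_gt0 p_pr cop_pm.
have mp_gt0 k : (0 < m * p ^ k)%N by rewrite muln_gt0 m_gt0 expn_gt0 ltnW.
apply: uniq_perm; first exact: divisors_uniq.
  rewrite cat_uniq divisors_uniq map_inj_uniq ?divisors_uniq ?andbT; last first.
    by move=> a b /eqP; rewrite eqn_pmul2r ?expn_gt0 ?prime_gt0 // => /eqP.
  apply/hasPn => _ /mapP [d _ ->]; rewrite -dvdn_divisors //.
  apply/negP => /(dvdn_trans (dvdn_mull d (dvdnn _))).
  by rewrite (@Gauss_dvdr _ m) ?coprimeXl // dvdn_Pexp2l ?ltnn.
move=> x; rewrite mem_cat -!dvdn_divisors //; apply/idP/orP.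
  move=> x_dvd; case x_dvd': (x %| m * p ^ i)%N; first by left.
  right; have [d d_dvd ->] := dvdn_mul_pexpS p_pr cop_pm x_dvd (negbT x_dvd').
  by apply: map_f; rewrite -dvdn_divisors.
case=> [x_dvd | /mapP [d d_in ->]].
  by apply: dvdn_trans x_dvd _; rewrite expnS mulnCA dvdn_mull.
by apply: dvdn_mul => //; rewrite dvdn_divisors.
Qed.

Lemma big_divisors_mul_pexp (R : comNzRingType) (F : nat -> R) p m i :
  prime p -> coprime p m ->
  \prod_(d <- divisors (m * p ^ i)) F d =
  \prod_(d <- divisors m) \prod_(l < i.+1) F (d * p ^ l)%N.
Proof.
move=> p_pr cop_pm; elim: i => [|i IHi].
  by rewrite expn0 muln1; apply: eq_bigr => d _; rewrite big_ord1 expn0 muln1.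
rewrite (perm_big _ (perm_divisors_mul_pexpS i p_pr cop_pm)) big_cat /= IHi.
by rewrite big_map -big_split; apply: eq_bigr => d _; rewrite [RHS]big_ord_recr.
Qed.

Section CyclotomicModp.

Variable p : nat.
Hypothesis p_pr : prime p.

Definition Phi_modp (d : nat) : {poly 'F_p} := map_poly intr 'Phi_d.

Lemma Phi_modp_neq0 d : Phi_modp d != 0.
Proof. exact/monic_neq0/monic_map/Cyclotomic_monic. Qed.

Lemma prod_Phi_modp n : (0 < n)%N -> \prod_(d <- divisors n) Phi_modp d = 'X^n - 1.
Proof.
by move=> n_gt0; rewrite -rmorph_prod prod_Cyclotomic // rmorphB /= map_polyXn rmorph1.
Qed.

Lemma Xn_sub1_pexp m i : ('X^m - 1 : {poly 'F_p}) ^+ (p ^ i) = 'X^(m * p ^ i) - 1.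
Proof.
have p_char : p \in [pchar {poly 'F_p}] by rewrite pchar_poly pchar_Fp.
have p_nat : [pchar {poly 'F_p}].-nat (p ^ i)%N.
  by rewrite (eq_pnat _ (pcharf_eq p_char)) pnatX pnat_id.
by rewrite exprDn_pchar // exprNn_pchar // expr1n -exprM.
Qed.

Lemma prod_Phi_modp_mul_pexp m i : coprime p m ->
  \prod_(l < i.+1) Phi_modp (m * p ^ l) = Phi_modp m ^+ (p ^ i).
Proof.
elim/ltn_ind: m => m IHm cop_pm.
have m_gt0 := prime_coprime_gt0 p_pr cop_pm.
have := big_divisors_mul_pexp Phi_modp i p_pr cop_pm.
rewrite prod_Phi_modp ?muln_gt0 ?m_gt0 ?expn_gt0 ?prime_gt0 //.
rewrite -Xn_sub1_pexp -prod_Phi_modp // -prodrXl.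
rewrite !(bigD1_seq m) ?divisors_id ?divisors_uniq //= => eq_prod.
have IHdiv : \prod_(d <- divisors m | d != m) \prod_(l < i.+1) Phi_modp (d * p ^ l) =
             \prod_(d <- divisors m | d != m) Phi_modp d ^+ (p ^ i).
  rewrite big_seq_cond [RHS]big_seq_cond; apply: eq_bigr => d /andP [d_in d_neq].
  move: d_in; rewrite -dvdn_divisors // => d_dvd.
  apply: IHm; last exact: coprime_dvdr d_dvd cop_pm.
  by rewrite ltn_neqAle d_neq dvdn_leq.
rewrite IHdiv in eq_prod; apply: (mulIf _ (esym eq_prod)).
by rewrite prodf_seq_neq0; apply/allP => d _; rewrite expf_neq0 ?Phi_modp_neq0 ?implybT.
Qed.

Lemma Phi_modp_mul_pexp m v : coprime p m ->
  exists2 c, (0 < c)%N & Phi_modp (m * p ^ v) = Phi_modp m ^+ c.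
Proof.
move=> cop_pm; case: v => [|k]; first by exists 1%N; rewrite ?expn0 ?muln1.
have := prod_Phi_modp_mul_pexp k.+1 cop_pm.
rewrite big_ord_recr /= prod_Phi_modp_mul_pexp // => eq_pk.
have pk_lt : (p ^ k < p ^ k.+1)%N by rewrite ltn_exp2l ?prime_gt1.
exists (p ^ k.+1 - p ^ k)%N; first by rewrite subn_gt0.
apply: (mulfI (expf_neq0 (p ^ k) (Phi_modp_neq0 m))).
by rewrite eq_pk -exprD subnKC // ltnW.
Qed.

Lemma Phi_modp_pexp_congr n k : (0 < n)%N ->
  exists a b, [/\ (0 < a)%N, (0 < b)%N & Phi_modp (n * p ^ k) ^+ a = Phi_modp n ^+ b].
Proof.
move=> n_gt0; have [m cop_pm def_n] := pfactor_coprime p_pr n_gt0.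
have [c1 c1_gt0 eq_c1] := Phi_modp_mul_pexp (logn p n + k) cop_pm.
have [c2 c2_gt0 eq_c2] := Phi_modp_mul_pexp (logn p n) cop_pm.
exists c2, c1; split => //.
by rewrite def_n -mulnA -expnD eq_c1 eq_c2 -!exprM mulnC.
Qed.

Lemma map_poly_Fp_eq0 (u : {poly int}) :
  map_poly (intr : int -> 'F_p) u = 0 -> exists h, u = h * p%:R.
Proof.
move=> u_modp; exists (\poly_(i < size u) ((u`_i) %/ p)%Z).
apply/polyP => i; rewrite mulr_natr coefMn coef_poly.
case: ltnP => [_ | i_ge]; last by rewrite nth_default // mul0rn.
have p_dvd : (p %| u`_i)%Z.
  have := congr1 (fun P : {poly 'F_p} => P`_i) u_modp; rewrite coef_map coef0 /=.
  case: (u`_i) => n /=; first by move/eqP; rewrite -(dvdn_pcharf (pchar_Fp p_pr)).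
  by rewrite NegzE mulrNz => /eqP; rewrite oppr_eq0 -(dvdn_pcharf (pchar_Fp p_pr)).
by rewrite -mulr_natr natz divzK.
Qed.

End CyclotomicModp.

Lemma exprD_mem_ideal (R : comNzRingType) (Y Z : R) n1 n2 :
  exists s t, (Y + Z) ^+ (n1 + n2) = s * Y ^+ n1 + t * Z ^+ n2.
Proof.
elim: n1 n2 => [|n1 IHn1] n2.
  by exists ((Y + Z) ^+ n2), 0; rewrite expr0 mulr1 mul0r addr0.
elim: n2 => [|n2 IHn2].
  by exists 0, ((Y + Z) ^+ n1.+1); rewrite addn0 expr0 mulr1 mul0r add0r.
have [s1 [t1 eq1]] := IHn1 n2.+1; have [s2 [t2 eq2]] := IHn2.
exists (s1 + Z * s2), (Y * t1 + t2).
rewrite addSn exprS mulrDl {1}eq1 -addSnnS eq2 !exprS; ring.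
Qed.

Lemma expr_mem_ideal_of_congr (R : comNzRingType) (X Y h q : R) a b : (0 < a)%N ->
  Y ^+ b = X ^+ a + h * q ->
  forall e j, exists s t, Y ^+ (b * (e + j)) = s * X ^+ e + t * q ^+ j.
Proof.
case: a => // a _ eq_YX e j.
have [s [t eq_st]] := exprD_mem_ideal (X ^+ a.+1) (h * q) e j.
exists (s * X ^+ a ^+ e), (t * h ^+ j).
rewrite exprM eq_YX eq_st exprS !exprMn; ring.
Qed.

Lemma Phi_pexp_mem_ideal p n n' k : prime p -> (0 < n)%N -> (0 < n')%N ->
  (n' = (n * p ^ k)%N \/ n = (n' * p ^ k)%N) ->
  forall e j, exists M s t, 'Phi_n' ^+ M = s * 'Phi_n ^+ e + t * (p ^ j)%:R.
Proof.
move=> p_pr n_gt0 n'_gt0 n_n'.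
have [a [b [a_gt0 _ eq_ab]]] :
    exists a b, [/\ (0 < a)%N, (0 < b)%N & Phi_modp p n ^+ a = Phi_modp p n' ^+ b].
  case: n_n' => ->; last exact: Phi_modp_pexp_congr.
  by have [a [b [? ? ?]]] := Phi_modp_pexp_congr p_pr k n_gt0; exists b, a.
have [h eq_h] : exists h, 'Phi_n' ^+ b - 'Phi_n ^+ a = h * p%:R.
  by apply: map_poly_Fp_eq0 => //; rewrite rmorphB !rmorphXn /= -eq_ab subrr.
have eq_b : 'Phi_n' ^+ b = 'Phi_n ^+ a + h * p%:R by rewrite -eq_h addrC subrK.
move=> e j; exists (b * (e + j))%N; rewrite natrX.
exact: expr_mem_ideal_of_congr a_gt0 eq_b e j.
Qed.

Lemma int_padic_separated p : (1 < p)%N -> padic_separated int p.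
Proof.
move=> p_gt1 c /(_ `|c|%N) [b].
have := ltn_expl `|c|%N p_gt1; move: (p ^ `|c|)%N => k k_gt def_c.
have [b0 | b_neq0] := eqVneq b 0; first by rewrite def_c b0 mul0rn.
have abs_c : (`|c| = `|b| * k)%N by rewrite def_c -mulr_natr natz abszM absz_nat.
have : (k <= `|c|)%N by rewrite abs_c leq_pmull // absz_gt0.
by rewrite leqNgt k_gt.
Qed.

Lemma monic_mem_ideal_padic (R : nzRingType) p (F W : {poly R}) :
  padic_separated R p -> F \is monic ->
  (forall j, exists u v, W = u * F + v * (p ^ j)%:R) -> exists u, W = u * F.
Proof.
move=> sepR monF W_mem; exists (Pdiv.Ring.rdivp W F).
rewrite [LHS](Pdiv.RingMonic.rdivp_eq monF W).
suff -> : Pdiv.Ring.rmodp W F = 0 by rewrite addr0.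
apply/polyP => k; rewrite coef0; apply: sepR => j.
have [u [v ->]] := W_mem j.
rewrite Pdiv.RingMonic.rmodpD // Pdiv.RingMonic.rmodp_mull // add0r.
rewrite mulr_natr -scaler_nat Pdiv.RingMonic.rmodpZ // coefZ mulr_natl.
by eexists.
Qed.

(* Nagata's idealization Z (+) A, in which A is a square-zero ideal: the
   Z[q]-module A[q] embeds in the polynomials over this commutative ring, where
   division by monic polynomials is available. *)
Section Idealization.

Variable A : zmodType.

Definition idealization : Type := (int * A)%type.
Local Notation ZA := idealization.

HB.instance Definition _ := GRing.Zmodule.on ZA.

Definition idealization_mul (x y : ZA) : ZA := (x.1 * y.1, x.2 *~ y.1 + y.2 *~ x.1).

Lemma idealization_ext (x y : ZA) : x.1 = y.1 -> x.2 = y.2 -> x = y.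
Proof. by case: x y => [a b] [c d] /= -> ->. Qed.

Lemma idealization_mulA : associative idealization_mul.
Proof.
move=> x y z; apply: idealization_ext => /=; first by rewrite mulrA.
by rewrite !mulrzDl -!mulrzA addrA (mulrC z.1 x.1) (mulrC y.1 x.1).
Qed.

Lemma idealization_mulC : commutative idealization_mul.
Proof. by move=> x y; apply: idealization_ext; rewrite /= ?(mulrC x.1) // addrC. Qed.

Lemma idealization_mul1 : left_id (1, 0) idealization_mul.
Proof. by move=> x; apply: idealization_ext; rewrite /= ?mul1r // mul0rz add0r. Qed.

Lemma idealization_mulDl : left_distributive idealization_mul +%R.
Proof.
move=> x y z; apply: idealization_ext => /=; first by rewrite mulrDl.
by rewrite mulrzDl mulrzDr !addrA (addrAC (x.2 *~ z.1)).
Qed.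

Lemma idealization_one_neq0 : ((1, 0) : ZA) != 0.
Proof. by rewrite xpair_eqE oner_eq0. Qed.

HB.instance Definition _ := GRing.Zmodule_isComNzRing.Build ZA
  idealization_mulA idealization_mulC idealization_mul1 idealization_mulDl
  idealization_one_neq0.

Lemma idealization_intr (n : int) : (n%:~R : ZA) = (n, 0).
Proof. by apply: idealization_ext; rewrite raddfMz /= ?intz ?mul0rz. Qed.

Lemma idealization_padic_separated p :
  (1 < p)%N -> padic_separated A p -> padic_separated ZA p.
Proof.
move=> p_gt1 sepA x x_div; apply: idealization_ext => /=.
  apply: (int_padic_separated p_gt1) => j.
  by have [c ->] := x_div j; exists c.1; rewrite raddfMn.
by apply: sepA => j; have [c ->] := x_div j; exists c.2; rewrite raddfMn.
Qed.

Definition polyA (s : seq A) : {poly ZA} := \poly_(i < size s) ((0, s`_i) : ZA).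

Lemma coef_polyA s k : (polyA s)`_k = (0, s`_k) :> ZA.
Proof. by rewrite coef_poly; case: ltnP => // k_ge; rewrite nth_default. Qed.

Lemma coef_liftZ_mul (f : {poly int}) (u : {poly ZA}) k :
  ((u * map_poly intr f)`_k).2 = \sum_(i < k.+1) (u`_(k - i)).2 *~ f`_i.
Proof.
rewrite mulrC coefM raddf_sum; apply: eq_bigr => i _.
by rewrite coef_map /= idealization_intr /= mul0rz add0r.
Qed.

Lemma polyA_eqmodE (f : {poly int}) (s s' : seq A) :
  polyA_eqmod f s s' <-> exists u, polyA s - polyA s' = u * map_poly intr f.
Proof.
split=> [[r eq_r] | [u eq_u]].
  exists (polyA r); apply/polyP => k; apply: idealization_ext.
    rewrite mulrC coefM raddf_sum coefB !coef_polyA /= subr0 big1 // => i _.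
    by rewrite coef_polyA /= mulr0.
  rewrite coefB !coef_polyA /= eq_r coef_liftZ_mul.
  by apply: eq_bigr => i _; rewrite coef_polyA.
exists [seq c.2 | c <- u] => k.
have coef_snd i : [seq c.2 | c <- u]`_i = (u`_i).2.
  case: (ltnP i (size u)) => [i_lt | i_ge]; first by rewrite (nth_map 0).
  by rewrite !nth_default ?size_map.
have := congr1 (fun P : {poly ZA} => (P`_k).2) eq_u.
rewrite coefB !coef_polyA coef_liftZ_mul /= => ->.
by apply: eq_bigr => i _; rewrite coef_snd.
Qed.

End Idealization.

Lemma PhiStar1 S : PhiStar S 1.
Proof. by exists [::]; rewrite big_nil. Qed.

Lemma PhiStarM S f g : PhiStar S f -> PhiStar S g -> PhiStar S (f * g).
Proof.
move=> [s [s_S ->]] [t [t_S ->]]; exists (s ++ t); rewrite big_cat; split=> // m.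
by rewrite mem_cat => /orP [/s_S | /t_S].
Qed.

Lemma PhiStar_Phi_exp (S : nat -> Prop) n e : S n -> PhiStar S ('Phi_n ^+ e).
Proof.
by move=> n_S; exists (nseq e n); rewrite big_nseq iter_mulr_1; split=> // m /nseqP [->].
Qed.

Lemma PhiStar_sub (S S' : nat -> Prop) f :
  (forall n, S' n -> S n) -> PhiStar S' f -> PhiStar S f.
Proof. by move=> S'_S [s [s_S' ->]]; exists s; split=> // m /s_S'/S'_S. Qed.

Lemma PhiStar_monic S f : PhiStar S f -> f \is monic.
Proof. by move=> [s [_ ->]]; apply: monic_prod => m _; apply: Cyclotomic_monic. Qed.

Section Agreement.

Variables (A : zmodType) (S : nat -> Prop).
Hypothesis S_gt0 : forall n, S n -> (0 < n)%N.
Variables x y : {poly int} -> seq A.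
Hypotheses (x_lim : limit_elt S x) (y_lim : limit_elt S y).

Local Notation liftZ := (map_poly (intr : int -> idealization A)).

Let diff f : {poly idealization A} := polyA (x f) - polyA (y f).
Let agree f := exists u, diff f = u * liftZ f.

Lemma diff_mulr_mod f h : PhiStar S f -> PhiStar S (h * f) ->
  exists u, diff (h * f) - diff f = u * liftZ f.
Proof.
move=> f_S hf_S.
have [u eq_u] := (polyA_eqmodE _ _ _).1 (x_lim f_S hf_S (ex_intro _ h erefl)).
have [v eq_v] := (polyA_eqmodE _ _ _).1 (y_lim f_S hf_S (ex_intro _ h erefl)).
by exists (u - v); rewrite mulrBl -eq_u -eq_v /diff; ring.
Qed.

Lemma agree_trivial f : (forall a : A, a = 0) -> agree f.
Proof.
move=> A_triv; exists 0; rewrite mul0r /diff.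
have polyA0 (s : seq A) : polyA s = 0.
  apply/polyP => k; rewrite coef_polyA coef0.
  by apply: idealization_ext => //=; apply: A_triv.
by rewrite !polyA0 subrr.
Qed.

Lemma agree_transfer_pexp g n n' p k : prime p -> padic_separated A p ->
  PhiStar S g -> S n -> S n' -> (n' = (n * p ^ k)%N \/ n = (n' * p ^ k)%N) ->
  (forall M, agree (g * 'Phi_n' ^+ M)) -> forall e, agree (g * 'Phi_n ^+ e).
Proof.
move=> p_pr sepA g_S n_S n'_S n_n' agree_n' e.
set F := g * 'Phi_n ^+ e.
have F_S : PhiStar S F := PhiStarM g_S (PhiStar_Phi_exp e n_S).
apply: (monic_mem_ideal_padic (idealization_padic_separated (prime_gt1 p_pr) sepA)).
  exact/monic_map/(PhiStar_monic F_S).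
move=> j; have [M [s [t eq_M]]] := Phi_pexp_mem_ideal p_pr (S_gt0 n_S) (S_gt0 n'_S) n_n' e j.
have [a eq_a] := agree_n' M.
set G := g * 'Phi_n' ^+ M in eq_a *.
have G_S : PhiStar S G := PhiStarM g_S (PhiStar_Phi_exp M n'_S).
have eq_FG : 'Phi_n ^+ e * G = 'Phi_n' ^+ M * F by rewrite /F /G; ring.
have FG_S : PhiStar S ('Phi_n ^+ e * G) := PhiStarM (PhiStar_Phi_exp e n_S) G_S.
have [b eq_b] := diff_mulr_mod G_S FG_S.
rewrite eq_FG in FG_S eq_b; have [d eq_d] := diff_mulr_mod F_S FG_S.
have lift_G : liftZ G = liftZ g * (liftZ s * liftZ ('Phi_n ^+ e) + liftZ t * (p ^ j)%:R).
  by rewrite rmorphM eq_M rmorphD !rmorphM rmorph_nat.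
have lift_F : liftZ F = liftZ g * liftZ ('Phi_n ^+ e) by rewrite rmorphM.
exists ((a + b) * liftZ s - d), ((a + b) * liftZ g * liftZ t).
have -> : diff F = diff G + b * liftZ G - d * liftZ F by rewrite -eq_b -eq_d; ring.
by rewrite eq_a lift_G lift_F; ring.
Qed.

Lemma agree_transfer g n n' : PhiStar S g -> S n -> S n' -> equivA A n' n ->
  (forall M, agree (g * 'Phi_n' ^+ M)) -> forall e, agree (g * 'Phi_n ^+ e).
Proof.
move=> g_S n_S n'_S [<- // | [A_triv _ e | [p [k [p_pr [sepA n_n']]]]]].
  exact: agree_trivial.
exact: agree_transfer_pexp p_pr sepA g_S n_S n'_S n_n'.
Qed.

Variable S' : nat -> Prop.
Hypotheses (S'_S : forall n, S' n -> S n) (chainS : chain_condition A S S').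
Hypothesis xy_S' : forall g, PhiStar S' g -> polyA_eqmod g (x g) (y g).

Lemma agree_mul_prod s : (forall m, m \in s -> S m) ->
  forall g, PhiStar S' g -> agree (g * \prod_(m <- s) 'Phi_m).
Proof.
elim: s => [|n s IHs] ns_S g g_S'.
  by rewrite big_nil mulr1; apply/polyA_eqmodE/xy_S'.
have n_S : S n by apply: ns_S; rewrite mem_head.
have s_S m : m \in s -> S m by move=> m_in; apply: ns_S; rewrite in_cons m_in orbT.
have [r [c [c0_S' cr_n c_S c_equiv]]] := chainS n_S.
set G := g * \prod_(m <- s) 'Phi_m.
have G_S : PhiStar S G by apply: PhiStarM (PhiStar_sub S'_S g_S') _; exists s.
suff agree_c i : (i <= r)%N -> forall e, agree (G * 'Phi_(c i) ^+ e).
  by have := agree_c r (leqnn r) 1%N; rewrite cr_n expr1 big_cons /G mulrCA mulrC.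
elim: i => [|i IHi] i_r e.
  have := IHs s_S _ (PhiStarM g_S' (PhiStar_Phi_exp e c0_S')).
  by rewrite mulrAC.
have i_le := ltnW i_r.
exact: agree_transfer G_S (c_S _ i_r) (c_S _ i_le) (c_equiv _ i_r) (IHi i_le) e.
Qed.

Lemma agree_PhiStar f : PhiStar S f -> polyA_eqmod f (x f) (y f).
Proof.
move=> [s [s_S ->]]; apply/polyA_eqmodE.
by have := agree_mul_prod s_S (PhiStar1 S'); rewrite mul1r.
Qed.

End Agreement.

Unset Implicit Arguments.

Theorem theorem7p6 (A : zmodType) (S S' : nat -> Prop)
    (HSpos : forall n, S n -> (0 < n)%N)
    (HS'S : forall n, S' n -> S n)
    (Hchain : chain_condition A S S')
    (x y : {poly int} -> seq A)
    (Hx : limit_elt S x) (Hy : limit_elt S y)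
    (Hxy : forall g, PhiStar S' g -> polyA_eqmod g (x g) (y g)) :
  forall f, PhiStar S f -> polyA_eqmod f (x f) (y f).
Proof. move=> f; exact: (@agree_PhiStar A S HSpos x y Hx Hy S' HS'S Hchain Hxy f). Qed.
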